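(* For all non-negative integers $n$ and $p$, $$\sum_{k=1}^n\frac{1}{2^{2k}}\binom{2(k+p)}{k+p}\binom{k+p}{k}\left(O_{k+p}-O_p\right)=\frac{1}{2^{2n+1}}\,\frac{p+1}{2p+1}\binom{2(n+p+1)}{n+p+1}\binom{n+p+1}{n}\left(O_{n+p+1}-O_{p+1}\right).$$ In particular, $\sum_{k=1}^n\frac{O_k}{2^{2k}}\binom{2k}{k}=\frac{n+1}{2^{2n+1}}\binom{2(n+1)}{n+1}(O_{n+1}-1)$.
   Context: The odd harmonic numbers are $O_n=\sum_{k=1}^n\frac{1}{2k-1}$, $O_0=0$. *)

From mathcomp Require Import all_boot all_order all_algebra.
Set Implicit Arguments. Unset Strict Implicit. Unset Printing Implicit Defensive.
Import Order.TTheory GRing.Theory Num.Theory.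
Local Open Scope ring_scope.

Definition oddH (n : nat) : rat := \sum_(1 <= k < n.+1) ((2 * k - 1)%N%:R)^-1.

From mathcomp Require Import all_boot all_order all_algebra.
From mathcomp Require Import ring lra zify.

Import Order.TTheory GRing.Theory Num.Theory.
Local Open Scope ring_scope.

(* The sum telescopes: with N = n + p + 1, the difference of consecutive
   closed forms is brought to the summand by the three binomial recurrences
   C(2N+2, N+1) = 2 (2N+1)/(N+1) C(2N, N), C(N+1, n+1) = (N+1)/(n+1) C(N, n)
   and C(N, n+1) = (p+1)/(n+1) C(N, n), together with
   O_(N+1) = O_N + 1/(2N+1); what remains is a rational-function identity. *)

Lemma oddH0 : oddH 0 = 0.
Proof. by rewrite /oddH big_geq. Qed.

Lemma oddHS m : oddH m.+1 = oddH m + ((2 * m + 1)%:R)^-1.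
Proof. by rewrite /oddH big_nat_recr //=; congr (_ + _ ^-1); congr (_%:R); lia. Qed.

Lemma oddH1 : oddH 1 = 1.
Proof. by rewrite oddHS oddH0 add0r invr1. Qed.

Lemma natr_eq_div (R : numFieldType) (a b c d : nat) :
  (a * b = c * d)%N -> b != 0%N -> a%:R = c%:R * d%:R / b%:R :> R.
Proof.
move=> /(congr1 (fun x : nat => x%:R : R)); rewrite !natrM => eq_ab nz_b.
by rewrite -eq_ab mulfK // pnatr_eq0.
Qed.

Lemma mul_bin_centralS N :
  ('C(2 * N.+1, N.+1) * N.+1 = 2 * (2 * N + 1) * 'C(2 * N, N))%N.
Proof.
have up := mul_bin_diag (2 * N.+1) N.
have down := mul_bin_down (2 * N).+1 N.
rewrite (_ : (2 * N.+1).-1 = (2 * N).+1) in up; last by lia.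
rewrite /= (_ : (2 * N).+1 - N = N.+1)%N in down; last by lia.
apply/eqP; rewrite -(eqn_pmul2l (ltn0Sn N)) mulnA -up; apply/eqP; nia.
Qed.

Definition oddH_binom_term (p k : nat) : rat :=
  (2 ^+ (2 * k))^-1 * ('C(2 * (k + p), k + p))%:R * ('C(k + p, k))%:R
    * (oddH (k + p) - oddH p).

Definition oddH_binom_closed (p n : nat) : rat :=
  (2 ^+ (2 * n + 1))^-1 * ((p + 1)%:R / (2 * p + 1)%:R)
    * ('C(2 * (n + p + 1), n + p + 1))%:R * ('C(n + p + 1, n))%:R
    * (oddH (n + p + 1) - oddH (p + 1)).

Lemma oddH_binom_closed0 p : oddH_binom_closed p 0 = 0.
Proof. by rewrite /oddH_binom_closed add0n subrr mulr0. Qed.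

Lemma oddH_binom_closedS p n :
  oddH_binom_closed p n.+1 = oddH_binom_closed p n + oddH_binom_term p n.+1.
Proof.
rewrite /oddH_binom_closed /oddH_binom_term.
set N := (n + p + 1)%N.
have -> : (n.+1 + p + 1 = N.+1)%N by rewrite /N; lia.
have -> : (n.+1 + p = N)%N by rewrite /N; lia.
have -> : (2 * n.+1 + 1 = (2 * n + 1) + 2)%N by lia.
have -> : (2 * n.+1 = (2 * n + 1) + 1)%N by lia.
have central : ('C(2 * N.+1, N.+1))%:R
    = (2 * (2 * N + 1))%:R * ('C(2 * N, N))%:R / (N.+1)%:R :> rat.
  exact: natr_eq_div (mul_bin_centralS N) _.
have upper : ('C(N.+1, n.+1))%:R = (N.+1)%:R * ('C(N, n))%:R / (n.+1)%:R :> rat.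
  by apply: natr_eq_div; rewrite // mulnC -mul_bin_diag.
have lower : ('C(N, n.+1))%:R = (p + 1)%:R * ('C(N, n))%:R / (n.+1)%:R :> rat.
  apply: natr_eq_div => //; rewrite mulnC mul_bin_left; congr (_ * _)%N.
  by rewrite /N; lia.
have oddH_p1 : oddH (p + 1) = oddH p + ((2 * p + 1)%:R)^-1 by rewrite addn1 oddHS.
rewrite central upper lower oddHS oddH_p1 !(exprD 2 (2 * n + 1)) -(addn1 N) -(addn1 n).
have : 0 < 2 ^+ (2 * n + 1) :> rat by apply: exprn_gt0.
move: (2 ^+ (2 * n + 1)) (oddH N) (oddH p) ('C(2 * N, N))%:R ('C(N, n))%:R.
move=> t hN hp c d t_gt0.
rewrite /N ?natrD ?natrM.
have n_ge0 : 0 <= n%:R :> rat by []. have p_ge0 : 0 <= p%:R :> rat by [].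
by field; apply/and5P; split; apply: lt0r_neq0; lra.
Qed.

Lemma sum_oddH_binom_term p n :
  \sum_(1 <= k < n.+1) oddH_binom_term p k = oddH_binom_closed p n.
Proof.
elim: n => [|n IHn]; first by rewrite big_geq // oddH_binom_closed0.
by rewrite big_nat_recr //= IHn oddH_binom_closedS.
Qed.

Lemma sum_oddH_central_binom n :
  \sum_(1 <= k < n.+1) oddH k / 2 ^+ (2 * k) * ('C(2 * k, k))%:R
  = (n + 1)%:R / 2 ^+ (2 * n + 1) * ('C(2 * (n + 1), n + 1))%:R
      * (oddH (n + 1) - 1) :> rat.
Proof.
rewrite (eq_bigr (oddH_binom_term 0)); last first.
  by move=> k _; rewrite /oddH_binom_term !addn0 oddH0 subr0 binn mulr1 [RHS]mulrC mulrA.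
rewrite sum_oddH_binom_term /oddH_binom_closed !addn0 (addn1 n) binSn oddH1.
by rewrite muln0 add0n divr1; ring.
Qed.

Theorem theorem11 :
  (forall n p : nat,
    \sum_(1 <= k < n.+1)
       (2 ^+ (2 * k))^-1 * ('C(2 * (k + p), k + p))%:R * ('C(k + p, k))%:R
         * (oddH (k + p) - oddH p)
    = (2 ^+ (2 * n + 1))^-1 * ((p + 1)%:R / (2 * p + 1)%:R)
        * ('C(2 * (n + p + 1), n + p + 1))%:R * ('C(n + p + 1, n))%:R
        * (oddH (n + p + 1) - oddH (p + 1)) :> rat)
  /\
  (forall n : nat,
    \sum_(1 <= k < n.+1) oddH k / 2 ^+ (2 * k) * ('C(2 * k, k))%:R
    = (n + 1)%:R / 2 ^+ (2 * n + 1) * ('C(2 * (n + 1), n + 1))%:R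
        * (oddH (n + 1) - 1) :> rat).
Proof.
split=> [n p|]; [exact: sum_oddH_binom_term | exact: sum_oddH_central_binom].
Qed.
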